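(* Let $n,k,d$ be positive integers with $k\le d<n$, and let $n_1,\dots,n_l$ be positive integers with $n=n_1+\dots+n_l$ and $n_j\ge n-k+1$ for all $j=1,\dots,l$. Define $k_j=n_j-n+k$ and $d_j=n_j-n+d$ for $j=1,\dots,l$. Then for all $\alpha,\gamma>0$, $$C^{\mathrm{exact}}_{n,k,d}(\alpha,\gamma)\ \ge\ \sum_{j=1}^{l}C^{\mathrm{exact}}_{n_j,k_j,d_j}(\alpha,\gamma).$$
   Context: A distributed storage system (DSS) with parameters $(n,k,d)$ stores a file across $n$ nodes, each storing an amount $\alpha$ of information (e.g. $\alpha$ symbols over a finite field, where symbols may be split into arbitrarily many sub-symbols), such that the file can be reconstructed from the contents of any $k$ nodes, and any lost node can be repaired by contacting any $d$ of the remaining nodes, each of which transmits an amount $\beta$ to the replacement node, for a total repair bandwidth $\gamma=d\beta$. Repair is exact: the replacement node stores exactly the same content as the lost node. $C^{\mathrm{exact}}_{n,k,d}(\alpha,\gamma)$ denotes the maximum size of a file that can be stored by such an exact-repair DSS with $n$ nodes, node size $\alpha$ and total repair bandwidth $\gamma$. *)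

From HB Require Import structures.
From mathcomp Require Import all_boot all_order all_algebra.
From mathcomp Require Import all_classical all_reals all_analysis.
Set Implicit Arguments. Unset Strict Implicit. Unset Printing Implicit Defensive.
Import Order.TTheory GRing.Theory Num.Theory.
Local Open Scope classical_set_scope.
Local Open Scope ring_scope.

(* An exact-repair DSS code with n nodes (indexed by 'I_n), reconstruction
   degree k and repair degree d.
   - M        : finite set of files (messages);
   - f i m    : content (element of an alphabet of size a) stored at node i
                when the file is m;
   - phi i D h s : what helper h in D sends (element of an alphabet of size
                b) when node i is repaired from helper set D, as a function of
                the content s stored at h.
   Exact repair: for any node i and any d-subset D of the other nodes, the
   messages sent by the helpers in D determine the content of node i.
   ("determine" = existence of a decoding function, stated as injectivity.) *)
Definition is_exact_DSS (n k d : nat) (M : finType) (a b : nat)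
  (f : 'I_n -> M -> 'I_a) (phi : 'I_n -> {set 'I_n} -> 'I_n -> 'I_a -> 'I_b)
  : Prop :=
  (forall K : {set 'I_n}, #|K| = k ->
     forall m m' : M, (forall h, h \in K -> f h m = f h m') -> m = m') /\
  (forall (i : 'I_n) (D : {set 'I_n}), i \notin D -> #|D| = d ->
     forall m m' : M,
       (forall h, h \in D -> phi i D h (f h m) = phi i D h (f h m')) ->
       f i m = f i m').

(* Achievable (normalised) file sizes with node size alpha and total repair
   bandwidth gamma (so per-helper bandwidth beta = gamma / d).  Information is
   measured as ln(alphabet size) / l for a free scale l > 0 (choice of unit /
   sub-packetization level): node storage <= alpha, helper transmission
   <= beta, file size = ln #|M| / l. *)
Definition dss_file_sizes {R : realType} (n k d : nat) (alpha gamma : R)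
  : set R :=
  [set x | exists (l : R) (M : finType) (a b : nat)
             (f : 'I_n -> M -> 'I_a)
             (phi : 'I_n -> {set 'I_n} -> 'I_n -> 'I_a -> 'I_b),
     [/\ 0 < l, (0 < #|M|)%N,
         ln (a%:R : R) <= alpha * l /\
         ln (b%:R : R) <= gamma / d%:R * l,
         is_exact_DSS k d f phi
       & x = ln (#|M|%:R : R) / l]].

Definition C_exact {R : realType} (n k d : nat) (alpha gamma : R) : R :=
  sup (dss_file_sizes n k d alpha gamma).

From HB Require Import structures.
From mathcomp Require Import all_boot all_order all_algebra all_fingroup.
From mathcomp Require Import all_classical all_reals all_analysis.
From mathcomp Require Import ring lra zify.
Set Implicit Arguments. Unset Strict Implicit. Unset Printing Implicit Defensive.
Import Order.TTheory GRing.Theory Num.Theory.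
Local Open Scope ring_scope.

(* Given near-optimal codes C_j for the parameters (n_j, k_j, d_j), build a
   code on n nodes that contains, for every permutation s of the nodes and
   every j, r_j copies of C_j placed on the nodes s(0), ..., s(n_j - 1).
   Any k nodes miss at most n - n_j nodes of a copy of C_j, hence contain at
   least k_j of them, so the file is recoverable; of any d helpers at least
   d_j lie in each copy containing the failed node, and a fixed choice of d_j
   of them repairs it.  Averaging over all permutations makes every node store
   the same amount, and every helper send the same amount with the per-helper
   budget gamma / d_j of C_j averaging out to gamma / d. *)

Lemma widen_ord_inj m n (le_mn : (m <= n)%N) : injective (widen_ord le_mn).
Proof. by move=> x y /(congr1 val) /= /val_inj. Qed.

Section Codes.
Variables (R : realType) (n k d : nat) (alpha gamma : R).

Record dss_code := DssCode {
  scale : R;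
  files : finType;
  node_size : nat;
  link_size : nat;
  store : 'I_n -> files -> 'I_node_size;
  transmit : 'I_n -> {set 'I_n} -> 'I_n -> 'I_node_size -> 'I_link_size;
  scale_gt0 : 0 < scale;
  card_files_gt0 : (0 < #|files|)%N;
  ln_node_size_le : ln (node_size%:R : R) <= alpha * scale;
  ln_link_size_le : ln (link_size%:R : R) <= gamma / d%:R * scale;
  dss_code_exact : is_exact_DSS k d store transmit }.

Definition file_size (c : dss_code) : R := ln (#|files c|%:R) / scale c.

Lemma dss_file_sizesP x :
  dss_file_sizes n k d alpha gamma x <-> exists c : dss_code, x = file_size c.
Proof.
split=> [[l [M [a [b [f [phi [l_gt0 M_gt0 [a_le b_le] exact ->]]]]]]]|].
  by exists (DssCode l_gt0 M_gt0 a_le b_le exact).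
by move=> [[l M a b f phi ? ? ? ? ?] ->]; exists l, M, a, b, f, phi.
Qed.

Lemma file_size_ge0 c : 0 <= file_size c.
Proof. by rewrite divr_ge0 ?ln_ge0 ?ler1n ?card_files_gt0 // ltW // scale_gt0. Qed.

Lemma dss_file_sizes0 : 0 <= alpha -> 0 <= gamma -> dss_file_sizes n k d alpha gamma 0.
Proof.
move=> alpha_ge0 gamma_ge0.
exists 1, unit, 1%N, 1%N, (fun _ _ => ord0), (fun _ _ _ _ => ord0); split.
- exact: ltr01.
- by rewrite card_unit.
- by rewrite !ln1 !mulr1 divr_ge0.
- by split=> [K _ [] []|].
- by rewrite card_unit ln1 mul0r.
Qed.

Lemma file_size_le c : (k <= n)%N -> file_size c <= k%:R * alpha.
Proof.
move=> le_kn; case: c => l M a b f phi l_gt0 M_gt0 a_le ? [recon ?].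
rewrite /file_size /= ler_pdivrMr //.
pose K := [set widen_ord le_kn y | y : 'I_k].
have cardK : #|K| = k by rewrite card_imset ?card_ord //; exact: widen_ord_inj.
pose read m := [ffun y : 'I_k => f (widen_ord le_kn y) m].
have read_inj : injective read.
  move=> m m' /ffunP eq_read; apply: (recon K cardK) => _ /imsetP [y _ ->].
  by have := eq_read y; rewrite !ffunE.
have le_M : (#|M| <= a ^ k)%N.
  by have := leq_card _ read_inj; rewrite card_ffun !card_ord.
have ak_gt0 : (0 < a ^ k)%N := leq_trans M_gt0 le_M.
apply: (@le_trans _ _ (ln ((a ^ k)%N%:R))).
  by rewrite ler_ln ?ler_nat // posrE ltr0n.
move: ak_gt0; rewrite expn_gt0 => /orP [a_gt0|/eqP k0].
  by rewrite natrX lnXn ?ltr0n // -[ln _ *+ _]mulr_natl -mulrA ler_wpM2l.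
by rewrite k0 expn0 ln1 !mul0r.
Qed.

Lemma dss_file_sizes_ub : (k <= n)%N ->
  ubound (dss_file_sizes n k d alpha gamma) (k%:R * alpha).
Proof. by move=> le_kn _ /dss_file_sizesP [c ->]; exact: file_size_le. Qed.

Lemma file_size_le_C_exact c : (k <= n)%N -> file_size c <= C_exact n k d alpha gamma.
Proof.
move=> le_kn; apply: sup_upper_bound; last by apply/dss_file_sizesP; exists c.
split; first by exists (file_size c); apply/dss_file_sizesP; exists c.
by exists (k%:R * alpha); exact: dss_file_sizes_ub.
Qed.

Lemma C_exact_approx eps : 0 <= alpha -> 0 <= gamma -> (k <= n)%N -> 0 < eps ->
  exists c : dss_code, C_exact n k d alpha gamma - eps < file_size c.
Proof.
move=> alpha_ge0 gamma_ge0 le_kn eps_gt0.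
have sizes_sup : has_sup (dss_file_sizes n k d alpha gamma).
  split; first by exists 0; exact: dss_file_sizes0.
  by exists (k%:R * alpha); exact: dss_file_sizes_ub.
have [_ /dss_file_sizesP [c ->] near_sup] := sup_adherent eps_gt0 sizes_sup.
by exists c.
Qed.

End Codes.

Arguments store {R n k d alpha gamma} _ _ _.
Arguments transmit {R n k d alpha gamma} _ _ _ _ _.

Section WeightedAverage.
Variable R : realType.

Definition mult_above (T l : R) : nat := (Num.truncn (T / l)).+1.

Lemma mult_aboveP T l : 0 < l -> 0 <= T -> T <= (mult_above T l)%:R * l <= T + l.
Proof.
move=> l_gt0 T_ge0; apply/andP; split.
  by rewrite -ler_pdivrMr // ltW // truncnS_gt.
rewrite /mult_above -natr1 mulrDl mul1r lerD2r -ler_pdivlMr //.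
by rewrite truncn_le divr_ge0 // ltW.
Qed.

(* With every [r j * l j] close to a common large [T], the numerator is about
   [T * \sum_j X j] and the denominator about [n * T]. *)
Lemma weighted_average_approx L (w : 'I_L -> nat) (l X : 'I_L -> R) n delta :
  n = (\sum_j w j)%N -> (0 < n)%N -> (forall j, 0 < l j) -> (forall j, 0 <= X j) ->
  0 < delta ->
  exists2 r : 'I_L -> nat, (forall j, 0 < r j)%N &
    \sum_j X j <= n%:R * (\sum_j (r j)%:R * (X j * l j)) /
                    (\sum_j (r j)%:R * (w j)%:R * l j) + delta.
Proof.
move=> def_n n_gt0 l_gt0 X_ge0 delta_gt0.
set Xs := \sum_j X j; set S := \sum_j (w j)%:R * l j.
have Xs_ge0 : 0 <= Xs by apply: sumr_ge0.
have S_ge0 : 0 <= S by apply: sumr_ge0 => j _; rewrite mulr_ge0 // ltW.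
have nR_gt0 : 0 < (n%:R : R) by rewrite ltr0n.
pose T := Xs * S / (delta * n%:R) + 1.
have T_gt0 : 0 < T by rewrite ltr_pwDr // divr_ge0 ?mulr_ge0 // ltW // mulr_gt0.
pose r j := mult_above T (l j).
have r_bounds j : T <= (r j)%:R * l j <= T + l j by exact: mult_aboveP (ltW _).
exists r => [//|]; set N := \sum_j _; set D := \sum_j _.
have N_ge : T * Xs <= N.
  rewrite /Xs mulr_sumr; apply: ler_sum => j _.
  have /andP [lo _] := r_bounds j.
  by rewrite mulrCA [T * _]mulrC ler_wpM2l.
have D_le : D <= n%:R * T + S.
  rewrite /D /S def_n natr_sum mulr_suml -big_split /=; apply: ler_sum => j _.
  have /andP [_ hi] := r_bounds j.
  by rewrite -mulrDr -mulrA mulrCA ler_wpM2l // mulrC.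
have D_ge : n%:R * T <= D.
  rewrite /D def_n natr_sum mulr_suml; apply: ler_sum => j _.
  have /andP [lo _] := r_bounds j.
  by rewrite -mulrA mulrCA ler_wpM2l // mulrC.
have nT_gt0 : 0 < n%:R * T by rewrite mulr_gt0.
have D_gt0 : 0 < D := lt_le_trans nT_gt0 D_ge.
have N_ge0 : 0 <= N by apply: le_trans N_ge; rewrite mulr_ge0 // ltW.
have T_large : Xs * S <= delta * (n%:R * T).
  have -> : delta * (n%:R * T) = Xs * S + delta * n%:R.
    by rewrite /T; field; rewrite !gt_eqF.
  by rewrite lerDl mulr_ge0 // ltW.
rewrite -lerBlDr.
apply: (@le_trans _ _ (n%:R * T * Xs / (n%:R * T + S))).
  rewrite ler_pdivlMr ?ltr_wpDr //.
  have dS_ge0 : 0 <= delta * S by rewrite mulr_ge0 // ltW.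
  have -> : (Xs - delta) * (n%:R * T + S) =
    n%:R * T * Xs + (Xs * S - delta * (n%:R * T)) - delta * S by ring.
  move: T_large dS_ge0; set u := Xs * S; set v := delta * _; set t := delta * S.
  lra.
apply: (@le_trans _ _ (n%:R * N / (n%:R * T + S))).
  by rewrite ler_pM2r ?invr_gt0 ?ltr_wpDr // -mulrA ler_pM2l.
by rewrite ler_wpM2l ?mulr_ge0 // lef_pV2 ?posrE ?ltr_wpDr.
Qed.

End WeightedAverage.

Section SubsetOfCard.
Variable T : finType.

Definition subset_of_card (p : nat) (A : {set T}) : {set T} :=
  odflt A [pick S : {set T} | (S \subset A) && (#|S| == p)].

Lemma subset_of_card_sub p (A : {set T}) : subset_of_card p A \subset A.
Proof. by rewrite /subset_of_card; case: pickP => [S /andP [] //|]. Qed.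

Lemma card_subset_of_card p (A : {set T}) : (p <= #|A|)%N -> #|subset_of_card p A| = p.
Proof.
move=> /card_geqP [s [uniq_s size_s sub_s]]; rewrite /subset_of_card.
case: pickP => [S /andP [_ /eqP //]|no_subset].
have := no_subset [set x in s]; rewrite cardsE (card_uniqP uniq_s) size_s eqxx andbT.
by move/negbT/subsetPn => [x]; rewrite inE => /sub_s ->.
Qed.

End SubsetOfCard.

Lemma tperm_mem (T : finType) (D : {set T}) a b x :
  a \in D -> b \in D -> (tperm a b x \in D) = (x \in D).
Proof. by move=> aD bD; case: tpermP => [->|->|]; rewrite ?aD ?bD. Qed.

Lemma card_perm_mulr (T : finType) (t : {perm T}) (P Q : pred {perm T}) :
  (forall s, Q (s * t)%g = P s) -> #|[set s | P s]| = #|[set s | Q s]|.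
Proof.
move=> QP; rewrite -(card_imset _ (mulIg t)); apply: eq_card => s.
rewrite inE; apply/imsetP/idP => [[u]|Qs].
  by rewrite inE => Pu ->; rewrite QP.
exists (s * t^-1)%g; last by rewrite -mulgA mulVg mulg1.
by rewrite inE -QP -mulgA mulVg mulg1.
Qed.

Section Placement.
Variables (n m : nat) (le_mn : (m <= n)%N).

Definition place (s : {perm 'I_n}) (u : 'I_m) : 'I_n := s (widen_ord le_mn u).

Lemma place_inj s : injective (place s).
Proof. by move=> u v /perm_inj /widen_ord_inj. Qed.

Lemma place_mul_tperm s a b u : place (s * tperm a b)%g u = tperm a b (place s u).
Proof. by rewrite /place permM. Qed.

Definition slot s (i : 'I_n) : option 'I_m := [pick u | place s u == i].

Lemma slotP s i u : slot s i = Some u <-> place s u = i.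
Proof.
rewrite /slot; case: pickP => [v /eqP vi|none]; split.
- by move=> [<-].
- by move=> ui; congr Some; apply: (@place_inj s); rewrite vi ui.
- by [].
- by move=> ui; have := none u; rewrite ui eqxx.
Qed.

Lemma slot_place s u : slot s (place s u) = Some u.
Proof. exact/slotP. Qed.

Definition covered s i : bool := slot s i.

Lemma coveredP s i : reflect (exists u, place s u = i) (covered s i).
Proof.
rewrite /covered; case si : (slot s i) => [u|]; constructor; first by exists u; apply/slotP.
by move=> [u /slotP]; rewrite si.
Qed.

Definition ncovered i := #|[set s | covered s i]|.

Lemma ncovered_const i i' : ncovered i = ncovered i'.
Proof.
apply: (card_perm_mulr (t := tperm i i')) => s.
apply/coveredP/coveredP => [[u]|[u <-]]; last by exists u; rewrite place_mul_tperm tpermL.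
by rewrite place_mul_tperm => /(congr1 (tperm i i')); rewrite tpermK tpermR; exists u.
Qed.

(* Double counting of the pairs (s, i) with i covered by s. *)
Lemma mul_ncovered i : (n * ncovered i = m * #|{perm 'I_n}|)%N.
Proof.
have -> : (n * ncovered i = \sum_(i' : 'I_n) ncovered i')%N.
  by rewrite (eq_bigr (fun _ => ncovered i)) ?sum_nat_const ?card_ord // => i' _;
    exact: ncovered_const.
rewrite /ncovered; under eq_bigr do rewrite -sum1dep_card big_mkcond.
rewrite exchange_big /= (eq_bigr (fun _ => m)); first by rewrite sum_nat_const mulnC.
move=> s _; rewrite -big_mkcond sum1dep_card -[in RHS](card_ord m).
rewrite -(card_imset _ (@place_inj s)); apply: eq_card => i'.
by rewrite inE; apply/coveredP/imsetP => [[u <-]|[u _ ->]]; exists u.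
Qed.

Definition unplace_set s (D : {set 'I_n}) : {set 'I_m} := [set u | place s u \in D].

Lemma card_unplace_set s (D : {set 'I_n}) : (#|D| + m <= #|unplace_set s D| + n)%N.
Proof.
have -> : #|unplace_set s D| = #|D :&: (place s @: [set: 'I_m])|.
  rewrite -(card_imset _ (@place_inj s)); apply: eq_card => i.
  rewrite inE; apply/imsetP/andP => [[u]|[iD /imsetP [u _ iu]]].
    by rewrite inE => uD ->; split=> //; apply/imsetP; exists u.
  by exists u => //; rewrite inE -iu.
have cardP : #|place s @: [set: 'I_m]| = m.
  by rewrite card_imset ?cardsT ?card_ord //; exact: place_inj.
have := cardsUI D (place s @: [set: 'I_m]).
have := subset_leq_card (finset.subsetT (D :|: place s @: [set: 'I_m])).
rewrite cardsT card_ord cardP; lia.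
Qed.

Variable p : nat.

Definition helpers s (D : {set 'I_n}) := subset_of_card p (unplace_set s D).

Lemma card_helpers s (D : {set 'I_n}) : (p + n <= #|D| + m)%N -> #|helpers s D| = p.
Proof. by move=> le_p; apply: card_subset_of_card; have := card_unplace_set s D; lia. Qed.

Definition selected s (D : {set 'I_n}) h : bool :=
  if slot s h is Some v then v \in helpers s D else false.

Definition nselected i (D : {set 'I_n}) h := #|[set s | covered s i && selected s D h]|.

Lemma selectedP s (D : {set 'I_n}) h :
  reflect (exists2 v, v \in helpers s D & place s v = h) (selected s D h).
Proof.
rewrite /selected; case sh : (slot s h) => [u|]; apply: (iffP idP).
- by move=> hu; exists u => //; apply/slotP.
- by move=> [v vD /slotP]; rewrite sh => -[->].
- by [].
- by move=> [v _ /slotP]; rewrite sh.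
Qed.

Lemma selected_mem s (D : {set 'I_n}) h : selected s D h -> h \in D.
Proof.
by move/selectedP => [v /(fintype.subsetP (subset_of_card_sub _ _))]; rewrite inE => ? <-.
Qed.

(* A transposition of two helpers fixes the failed node and permutes the
   selections, so every helper is selected equally often. *)
Lemma nselected_const i (D : {set 'I_n}) h h' :
  i \notin D -> h \in D -> h' \in D -> nselected i D h = nselected i D h'.
Proof.
move=> iD hD h'D; apply: (card_perm_mulr (t := tperm h h')) => s.
have tperm_i : tperm h h' i = i by apply: tpermD; apply: contraNneq iD => <-.
have unplace_tperm : unplace_set (s * tperm h h')%g D = unplace_set s D.
  by apply/setP => u; rewrite !inE place_mul_tperm tperm_mem.
congr andb.
  apply/coveredP/coveredP => [[u su]|[u su]].
    by exists u; apply: (@perm_inj _ (tperm h h')); rewrite -place_mul_tperm su tperm_i.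
  by exists u; rewrite place_mul_tperm su.
apply/selectedP/selectedP => [[v]|[v vD sv]].
  rewrite /helpers unplace_tperm place_mul_tperm => vD /(congr1 (tperm h h')).
  by rewrite tpermK tpermR; exists v.
exists v; first by rewrite /helpers unplace_tperm.
by rewrite place_mul_tperm sv tpermL.
Qed.

Lemma sum_nselected i (D : {set 'I_n}) : (p + n <= #|D| + m)%N ->
  (\sum_(h in D) nselected i D h = p * ncovered i)%N.
Proof.
move=> le_p; rewrite /nselected /ncovered.
under eq_bigr do rewrite -sum1dep_card big_mkcond.
rewrite exchange_big /= -sum1dep_card big_distrr /= [RHS]big_mkcond /=.
apply: eq_bigr => s _; rewrite muln1.
case: (covered s i) => /=; last by rewrite big1.
rewrite -big_mkcondr sum1dep_card /=.
rewrite -[in RHS](card_helpers s le_p) -(card_imset _ (@place_inj s)); apply: eq_card => h.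
rewrite inE; apply/andP/imsetP => [[_ /selectedP [v vD <-]]|[v vD ->]]; first by exists v.
have sel : selected s D (place s v) by apply/selectedP; exists v.
by split=> //; exact: selected_mem sel.
Qed.

Lemma mul_nselected i (D : {set 'I_n}) h : i \notin D -> h \in D -> (p + n <= #|D| + m)%N ->
  (#|D| * nselected i D h = p * ncovered i)%N.
Proof.
move=> iD hD le_p; rewrite -(sum_nselected i le_p) -sum_nat_const.
by apply: eq_bigr => h' h'D; exact: nselected_const.
Qed.

End Placement.

Section EncodeSubset.
Variables (T : finType) (S : {pred T}) (N : nat).

Definition enc_in (x : T) : 'I_N.+1 := inord (index x (enum S)).

Definition dec_in (x0 : T) (y : 'I_N.+1) : T := nth x0 (enum S) y.

Lemma enc_inK x0 x : x \in S -> (#|S| <= N.+1)%N -> dec_in x0 (enc_in x) = x.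
Proof.
move=> xS le_S; rewrite /dec_in /enc_in inordK ?nth_index ?mem_enum //.
by apply: leq_trans le_S; rewrite cardE index_mem mem_enum.
Qed.

End EncodeSubset.

Lemma inord_inj N a b : (a <= N)%N -> (b <= N)%N -> inord a = inord b :> 'I_N.+1 -> a = b.
Proof. by move=> aN bN /(congr1 (@nat_of_ord _)); rewrite !inordK. Qed.

Lemma card_ord_ltn N b : (b <= N)%N -> #|[pred y : 'I_N | (y < b)%N]| = b.
Proof.
move=> bN; rewrite -[RHS](card_ord b) -(card_imset _ (@widen_ord_inj _ _ bN)).
apply: eq_card => y; rewrite inE; apply/idP/imsetP => [yb|[z _ ->]] /=.
  by exists (Ordinal yb) => //; apply: val_inj.
exact: ltn_ord.
Qed.

Lemma ln_natr_prod (R : realType) (T : finType) (F : T -> nat) :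
  (forall x, 0 < F x)%N -> ln ((\prod_x F x)%:R : R) = \sum_x ln ((F x)%:R).
Proof.
move=> F_gt0; rewrite natr_prod.
suff [-> _] : \sum_x ln ((F x)%:R : R) = ln (\prod_x (F x)%:R) /\ 0 < \prod_x ((F x)%:R : R).
  by [].
elim/big_rec2: _ => [|x a b _ [-> b_gt0]]; first by rewrite ln1 ltr01.
by split; [rewrite lnM ?posrE ?ltr0n | rewrite mulr_gt0 ?ltr0n].
Qed.

Lemma sumr_if_const (R : realType) (T : finType) (P : pred T) (v : R) :
  \sum_s (if P s then v else 0) = (#|[set s | P s]|)%:R * v.
Proof. by rewrite -big_mkcond sumr_const cardsE mulr_natl. Qed.

Section Composite.
Variables (R : realType) (n k d L : nat) (nj r : 'I_L -> nat) (alpha gamma : R).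
Hypotheses (le_nj : forall j, (nj j <= n)%N) (nj_gt0 : forall j, (0 < nj j)%N)
  (dj_gt0 : forall j, (0 < nj j + d - n)%N) (r_gt0 : forall j, (0 < r j)%N)
  (n_gt0 : (0 < n)%N) (L_gt0 : (0 < L)%N) (gamma_ge0 : 0 <= gamma).
Variable c : forall j, dss_code (nj j) (nj j + k - n) (nj j + d - n) alpha gamma.

Local Notation aj j := (node_size (c j)).
Local Notation bj j := (link_size (c j)).
Local Notation dj j := (nj j + d - n)%N.

Definition copy := {j : 'I_L & ('I_(r j) * {perm 'I_n})%type}.

Definition copy_perm (x : copy) : {perm 'I_n} := (tagged x).2.

Definition copy_slot (x : copy) i : option 'I_(nj (tag x)) :=
  slot (le_nj (tag x)) (copy_perm x) i.

Definition copy_covered (x : copy) i := covered (le_nj (tag x)) (copy_perm x) i.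

Definition copy_helpers (x : copy) D := helpers (le_nj (tag x)) (dj (tag x)) (copy_perm x) D.

Definition copy_selected (x : copy) D h :=
  selected (le_nj (tag x)) (dj (tag x)) (copy_perm x) D h.

Definition comp_files := {dffun forall x : copy, files (c (tag x))}.

Definition amax := (\max_j aj j)%N.
Definition bmax := (\max_j bj j)%N.

Definition content i (m : comp_files) : {ffun copy -> 'I_amax.+1} :=
  [ffun x => inord (if copy_slot x i is Some u then val (store (c (tag x)) u (m x)) else 0%N)].

(* Copies not covering [i] only contribute the value 0, so [#|contents i|] is
   the product of the node sizes of the copies covering [i]. *)
Definition content_bound i (x : copy) : nat :=
  if copy_slot x i is Some _ then aj (tag x) else 1%N.

Definition contents i : pred {ffun copy -> 'I_amax.+1} :=
  family (fun x => [pred y : 'I_amax.+1 | (y < content_bound i x)%N]).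

Definition comp_node_size := (\max_(i : 'I_n) #|contents i|)%N.

(* [comp_node_size.-1.+1] equals the positive [comp_node_size]; the successor
   form is what [enc_in] needs. *)
Definition comp_store i m : 'I_comp_node_size.-1.+1 :=
  enc_in (contents i) comp_node_size.-1 (content i m).

Definition repairing i (D : {set 'I_n}) h := [&& i \notin D, #|D| == d & h \in D].

(* [z0] only serves to cast [y x] back into the node alphabet of the copy. *)
Definition copy_message (x : copy) i D h (y : {ffun copy -> 'I_amax.+1}) : nat :=
  match copy_slot x i, copy_slot x h, [pick z : 'I_(aj (tag x))] with
  | Some u, Some v, Some z0 =>
      if v \in copy_helpers x D then
        val (transmit (c (tag x)) u (copy_helpers x D) v (insubd z0 (y x : nat)))
      else 0%N
  | _, _, _ => 0%N
  end.

Definition message i D h y : {ffun copy -> 'I_bmax.+1} :=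
  [ffun x => inord (if repairing i D h then copy_message x i D h y else 0%N)].

Definition message_bound i D h (x : copy) : nat :=
  if [&& repairing i D h, copy_covered x i & copy_selected x D h] then bj (tag x) else 1%N.

Definition messages i D h : pred {ffun copy -> 'I_bmax.+1} :=
  family (fun x => [pred z : 'I_bmax.+1 | (z < message_bound i D h x)%N]).

Definition comp_link_size :=
  (\max_(t : 'I_n * {set 'I_n} * 'I_n) #|messages t.1.1 t.1.2 t.2|)%N.

Definition comp_transmit i D h (z : 'I_comp_node_size.-1.+1) : 'I_comp_link_size.-1.+1 :=
  enc_in (messages i D h) comp_link_size.-1
    (message i D h (dec_in (contents h) [ffun _ => ord0] z)).

Lemma node_size_le_amax j : (aj j <= amax)%N.
Proof. exact: leq_bigmax. Qed.

Lemma link_size_le_bmax j : (bj j <= bmax)%N.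
Proof. exact: leq_bigmax. Qed.

Lemma node_size_gt0 j : (0 < aj j)%N.
Proof.
have /card_gt0P [m0 _] := card_files_gt0 (c j).
exact: leq_trans (ltn_ord (store (c j) (Ordinal (nj_gt0 j)) m0)).
Qed.

Lemma link_size_gt0 j : (0 < bj j)%N.
Proof.
have /card_gt0P [m0 _] := card_files_gt0 (c j).
pose u := Ordinal (nj_gt0 j).
exact: leq_trans (ltn_ord (transmit (c j) u (finset.set0 : {set _}) u (store (c j) u m0))).
Qed.

Lemma dj_addn j : (dj j + n = d + nj j)%N.
Proof. by have := dj_gt0 j; lia. Qed.

Lemma val_le_amax (x : copy) (u : 'I_(aj (tag x))) : (val u <= amax)%N.
Proof. exact: ltnW (leq_trans (ltn_ord _) (node_size_le_amax _)). Qed.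

Lemma val_le_bmax (x : copy) (u : 'I_(bj (tag x))) : (val u <= bmax)%N.
Proof. exact: ltnW (leq_trans (ltn_ord _) (link_size_le_bmax _)). Qed.

Lemma content_in i m : content i m \in contents i.
Proof.
apply/familyP => x; rewrite ffunE inE /content_bound.
by case: (copy_slot x i) => [u|] /=; rewrite inordK ?ltnS ?val_le_amax.
Qed.

Lemma card_comp_files : #|comp_files| = (\prod_(x : copy) #|files (c (tag x))|)%N.
Proof. by rewrite card_dep_ffun foldrE big_map big_enum. Qed.

Lemma card_comp_files_gt0 : (0 < #|comp_files|)%N.
Proof. by rewrite card_comp_files prodn_gt0 // => x; exact: card_files_gt0. Qed.

Lemma card_contents_le i : (#|contents i| <= comp_node_size)%N.
Proof. exact: (leq_bigmax i). Qed.

Lemma comp_node_size_gt0 : (0 < comp_node_size)%N.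
Proof.
have /card_gt0P [m0 _] := card_comp_files_gt0.
apply: leq_trans (card_contents_le (Ordinal n_gt0)).
by apply/card_gt0P; exists (content (Ordinal n_gt0) m0); exact: content_in.
Qed.

Lemma comp_storeK i m : dec_in (contents i) [ffun _ => ord0] (comp_store i m) = content i m.
Proof.
by rewrite enc_inK ?content_in // prednK ?card_contents_le // comp_node_size_gt0.
Qed.

Lemma message_in i D h y : message i D h y \in messages i D h.
Proof.
apply/familyP => x; rewrite ffunE inE /message_bound.
case: (repairing i D h) => /=; last first.
  by rewrite inordK //; case: ifP => _ //; exact: link_size_gt0.
rewrite /copy_message /copy_covered /copy_selected /covered /selected.
rewrite -/(copy_slot x i) -/(copy_slot x h) -/(copy_helpers x D).
case: (copy_slot x i) => [u|] /=; last by rewrite inordK.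
case: (copy_slot x h) => [v|] /=; last by rewrite inordK.
case: pickP => [z0 _|_]; first by case: ifP => _; rewrite inordK ?ltnS ?val_le_bmax.
by rewrite inordK //; case: ifP => _ //; exact: link_size_gt0.
Qed.

Lemma card_messages_le i D h : (#|messages i D h| <= comp_link_size)%N.
Proof. exact: (leq_bigmax (i, D, h)). Qed.

Lemma comp_link_size_gt0 : (0 < comp_link_size)%N.
Proof.
pose i0 := Ordinal n_gt0; apply: leq_trans (card_messages_le i0 finset.set0 i0).
by apply/card_gt0P; exists (message i0 finset.set0 i0 [ffun _ => ord0]); exact: message_in.
Qed.

Lemma messageK i D h y :
  dec_in (messages i D h) [ffun _ => ord0] (enc_in (messages i D h) comp_link_size.-1
    (message i D h y)) = message i D h y.
Proof.
by rewrite enc_inK ?message_in // prednK ?card_messages_le // comp_link_size_gt0.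
Qed.

Lemma content_place m x v :
  content (place (le_nj (tag x)) (copy_perm x) v) m x = inord (val (store (c (tag x)) v (m x))).
Proof. by rewrite ffunE /copy_slot slot_place. Qed.

Lemma comp_reconstruct (K : {set 'I_n}) : #|K| = k -> forall m m',
  (forall h, h \in K -> comp_store h m = comp_store h m') -> m = m'.
Proof.
move=> cardK m m' same_store; apply/ffunP => x.
pose P := place (le_nj (tag x)) (copy_perm x).
set Kx := unplace_set (le_nj (tag x)) (copy_perm x) K.
have card_sub : #|subset_of_card (nj (tag x) + k - n) Kx| = (nj (tag x) + k - n)%N.
  apply: card_subset_of_card.
  by have := card_unplace_set (le_nj (tag x)) (copy_perm x) K; rewrite cardK -/Kx; lia.
apply: ((dss_code_exact (c (tag x))).1 _ card_sub) => u u_sub.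
have PuK : P u \in K.
  by have := fintype.subsetP (subset_of_card_sub _ _) u u_sub; rewrite inE.
have := congr1 (dec_in (contents (P u)) [ffun _ => ord0]) (same_store _ PuK).
rewrite !comp_storeK => /ffunP /(_ x); rewrite !content_place.
by move/inord_inj => /(_ (val_le_amax _) (val_le_amax _)) /val_inj.
Qed.

Lemma message_content i D h m x u v :
  repairing i D h -> copy_slot x i = Some u -> copy_slot x h = Some v ->
  v \in copy_helpers x D ->
  message i D h (content h m) x =
    transmit (c (tag x)) u (copy_helpers x D) v (store (c (tag x)) v (m x)) :> nat.
Proof.
move=> rep si sh vD; rewrite ffunE rep /copy_message si sh.
case: pickP => [z0 _|none]; last by have := none (store (c (tag x)) v (m x)).
rewrite vD ffunE sh (inordK (val_le_amax _)) valKd.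
by rewrite inordK // ltnS val_le_bmax.
Qed.

Lemma comp_repair i (D : {set 'I_n}) : i \notin D -> #|D| = d -> forall m m',
  (forall h, h \in D ->
     comp_transmit i D h (comp_store h m) = comp_transmit i D h (comp_store h m')) ->
  comp_store i m = comp_store i m'.
Proof.
move=> iD cardD m m' same_msg.
suff same_content : content i m = content i m' by rewrite /comp_store same_content.
apply/ffunP => x; rewrite !ffunE; case si : (copy_slot x i) => [u|] //.
congr (inord (val _)).
have Hx_sub := subset_of_card_sub (dj (tag x))
  (unplace_set (le_nj (tag x)) (copy_perm x) D).
have card_Hx : #|copy_helpers x D| = dj (tag x).
  by apply: card_helpers; rewrite cardD dj_addn.
apply: ((dss_code_exact (c (tag x))).2 u _ _ card_Hx) => [|v vHx].
  apply/negP => /(fintype.subsetP Hx_sub); rewrite inE.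
  by move: si => /slotP ->; rewrite (negbTE iD).
pose h := place (le_nj (tag x)) (copy_perm x) v.
have hD : h \in D by have := fintype.subsetP Hx_sub v vHx; rewrite inE.
have rep : repairing i D h by rewrite /repairing iD hD cardD eqxx.
have := congr1 (dec_in (messages i D h) [ffun _ => ord0]) (same_msg h hD).
rewrite /comp_transmit !comp_storeK !messageK => /ffunP /(_ x) /(congr1 (@nat_of_ord _)).
by rewrite !(message_content _ rep si (slot_place _ _ _) vHx) => /ord_inj.
Qed.

Lemma comp_exact_DSS : is_exact_DSS k d comp_store comp_transmit.
Proof. by split; [exact: comp_reconstruct | exact: comp_repair]. Qed.

Lemma sum_copy (G : 'I_L -> {perm 'I_n} -> R) :
  \sum_(x : copy) G (tag x) (copy_perm x) = \sum_j (r j)%:R * \sum_s G j s.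
Proof.
rewrite -(sig_big_dep xpredT (fun _ _ => true)
  (fun j (y : 'I_(r j) * {perm 'I_n}) => G j y.2)) /=.
apply: eq_bigr => j _.
rewrite -(pair_big xpredT xpredT (fun (t : 'I_(r j)) (s : {perm 'I_n}) => G j s)) /=.
by rewrite sumr_const card_ord mulr_natl.
Qed.

Lemma card_contents i : #|contents i| = (\prod_(x : copy) content_bound i x)%N.
Proof.
rewrite card_family foldrE big_map big_enum /=; apply: eq_bigr => x _.
apply: card_ord_ltn; rewrite /content_bound; case: (copy_slot x i) => // _.
exact: leq_trans (node_size_le_amax _) (leqnSn _).
Qed.

Lemma card_messages i D h : #|messages i D h| = (\prod_(x : copy) message_bound i D h x)%N.
Proof.
rewrite card_family foldrE big_map big_enum /=; apply: eq_bigr => x _.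
apply: card_ord_ltn; rewrite /message_bound; case: ifP => // _.
exact: leq_trans (link_size_le_bmax _) (leqnSn _).
Qed.

Lemma ln_card_contents i : ln (#|contents i|%:R : R) =
  \sum_j (r j)%:R * ((ncovered (le_nj j) i)%:R * ln ((aj j)%:R : R)).
Proof.
rewrite card_contents ln_natr_prod; last first.
  by move=> x; rewrite /content_bound; case: (copy_slot x i) => // _; exact: node_size_gt0.
under eq_bigr => x _.
  have -> : ln ((content_bound i x)%:R : R) =
      if covered (le_nj (tag x)) (copy_perm x) i then ln ((aj (tag x))%:R) else 0.
    by rewrite /content_bound /covered -/(copy_slot x i); case: (copy_slot x i); rewrite ?ln1.
  over.
rewrite (sum_copy (fun j s => if covered (le_nj j) s i then ln ((aj j)%:R : R) else 0)).
by apply: eq_bigr => j _; rewrite sumr_if_const.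
Qed.

Lemma ln_card_messages i D h : repairing i D h -> ln (#|messages i D h|%:R : R) =
  \sum_j (r j)%:R * ((nselected (le_nj j) (dj j) i D h)%:R * ln ((bj j)%:R : R)).
Proof.
move=> rep; rewrite card_messages ln_natr_prod; last first.
  by move=> x; rewrite /message_bound; case: ifP => // _; exact: link_size_gt0.
under eq_bigr => x _.
  have -> : ln ((message_bound i D h x)%:R : R) =
      if covered (le_nj (tag x)) (copy_perm x) i &&
         selected (le_nj (tag x)) (dj (tag x)) (copy_perm x) D h
      then ln ((bj (tag x))%:R) else 0.
    by rewrite /message_bound rep /=; case: ifP; rewrite ?ln1.
  over.
rewrite (sum_copy (fun j s => if covered (le_nj j) s i && selected (le_nj j) (dj j) s D h
  then ln ((bj j)%:R : R) else 0)).
by apply: eq_bigr => j _; rewrite sumr_if_const.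
Qed.

Lemma card_messages_idle i D h : ~~ repairing i D h -> #|messages i D h| = 1%N.
Proof.
by move=> /negbTE idle; rewrite card_messages big1 // => x _; rewrite /message_bound idle.
Qed.

Lemma card_perm_gt0 : (0 < #|{perm 'I_n}|)%N.
Proof. by apply/card_gt0P; exists 1%g. Qed.

Lemma ncovered_val j i :
  ((ncovered (le_nj j) i)%:R : R) = (nj j)%:R * #|{perm 'I_n}|%:R / n%:R.
Proof.
have /(congr1 (fun z => z%:R : R)) := mul_ncovered (le_nj j) i.
by rewrite !natrM => <-; field; rewrite pnatr_eq0 -lt0n.
Qed.

Lemma nselected_val j i D h : repairing i D h ->
  ((nselected (le_nj j) (dj j) i D h)%:R : R) =
    (dj j)%:R * (ncovered (le_nj j) i)%:R / d%:R.
Proof.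
move=> /and3P [iD /eqP cardD hD].
have := mul_nselected (le_nj j) (p := dj j) iD hD; rewrite cardD dj_addn => /(_ (leqnn _)).
move/(congr1 (fun z => z%:R : R)); rewrite !natrM => <-.
by field; rewrite pnatr_eq0 -lt0n; have := dj_gt0 j; have := le_nj j; lia.
Qed.

Lemma sum_scale_gt0 : 0 < \sum_j (r j)%:R * (nj j)%:R * scale (c j).
Proof.
rewrite (bigD1 (Ordinal L_gt0)) //= ltr_pwDl ?mulr_gt0 ?ltr0n ?scale_gt0 //.
by apply: sumr_ge0 => j _; rewrite !mulr_ge0 ?ler0n // ltW // scale_gt0.
Qed.

Definition comp_scale : R :=
  #|{perm 'I_n}|%:R / n%:R * \sum_j (r j)%:R * (nj j)%:R * scale (c j).

Lemma comp_scale_gt0 : 0 < comp_scale.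
Proof. by rewrite !mulr_gt0 ?invr_gt0 ?ltr0n ?card_perm_gt0 ?sum_scale_gt0. Qed.

Lemma comp_scaleE i :
  comp_scale = \sum_j (r j)%:R * ((ncovered (le_nj j) i)%:R * scale (c j)).
Proof.
rewrite /comp_scale mulr_sumr; apply: eq_bigr => j _; rewrite ncovered_val.
by field; rewrite pnatr_eq0 -lt0n.
Qed.

Lemma ln_comp_node_size_le : ln ((comp_node_size.-1.+1)%:R : R) <= alpha * comp_scale.
Proof.
rewrite prednK ?comp_node_size_gt0 //.
have [i max_i] := bigop.eq_bigmax (fun i => #|contents i|) (ltac:(by rewrite card_ord)).
rewrite /comp_node_size max_i ln_card_contents (comp_scaleE i) mulr_sumr; apply: ler_sum => j _.
rewrite [X in _ <= X]mulrCA ler_wpM2l // [X in _ <= X]mulrCA ler_wpM2l //.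
exact: ln_node_size_le.
Qed.

(* Each helper takes part in [dj j / d] of the repairs of a covered node, so
   the per-helper budget [gamma / dj j] of the copies adds up to [gamma / d]. *)
Lemma ln_comp_link_size_le : ln ((comp_link_size.-1.+1)%:R : R) <= gamma / d%:R * comp_scale.
Proof.
have d_gt0 : 0 < (d%:R : R).
  by rewrite ltr0n; have := dj_gt0 (Ordinal L_gt0); have := le_nj (Ordinal L_gt0); lia.
have scale_ge0 := ltW comp_scale_gt0.
rewrite prednK ?comp_link_size_gt0 //.
have [[[i D] h] max_t] := bigop.eq_bigmax (fun t : 'I_n * {set 'I_n} * 'I_n =>
  #|messages t.1.1 t.1.2 t.2|) (ltac:(by apply/card_gt0P; exists (Ordinal n_gt0, finset.set0, Ordinal n_gt0))).
rewrite /comp_link_size max_t /=.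
case rep : (repairing i D h); last first.
  by rewrite card_messages_idle ?rep // ln1 mulr_ge0 // divr_ge0.
rewrite ln_card_messages // (comp_scaleE i) mulr_sumr; apply: ler_sum => j _.
rewrite [X in _ <= X]mulrCA ler_wpM2l // nselected_val //.
have dj_gt0' : 0 < ((dj j)%:R : R) by rewrite ltr0n.
apply: (@le_trans _ _ ((dj j)%:R * (ncovered (le_nj j) i)%:R / d%:R *
                         (gamma / (dj j)%:R * scale (c j)))).
  by rewrite ler_wpM2l ?divr_ge0 ?mulr_ge0 //; exact: ln_link_size_le.
by rewrite le_eqVlt; apply/orP; left; apply/eqP; field; rewrite !gt_eqF.
Qed.

Definition composite_code : dss_code n k d alpha gamma :=
  DssCode comp_scale_gt0 card_comp_files_gt0 ln_comp_node_size_le ln_comp_link_size_le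
    comp_exact_DSS.

Lemma file_size_composite : file_size composite_code =
  n%:R * (\sum_j (r j)%:R * ln (#|files (c j)|%:R : R)) /
    (\sum_j (r j)%:R * (nj j)%:R * scale (c j)).
Proof.
have ln_files : ln (#|comp_files|%:R : R) =
    #|{perm 'I_n}|%:R * \sum_j (r j)%:R * ln (#|files (c j)|%:R : R).
  rewrite card_comp_files ln_natr_prod => [|x]; last exact: card_files_gt0.
  rewrite (sum_copy (fun j _ => ln (#|files (c j)|%:R : R))) mulr_sumr.
  by apply: eq_bigr => j _; rewrite sumr_const -[ln _ *+ _]mulr_natl mulrCA.
have perm_neq0 : (#|{perm 'I_n}|%:R : R) != 0 by rewrite pnatr_eq0 -lt0n card_perm_gt0.
have n_neq0 : (n%:R : R) != 0 by rewrite pnatr_eq0 -lt0n.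
rewrite /file_size /= ln_files /comp_scale; field.
by rewrite perm_neq0 n_neq0 gt_eqF ?sum_scale_gt0.
Qed.

End Composite.

Lemma ord_gt0_of_sum L (F : 'I_L -> nat) : (0 < \sum_j F j)%N -> (0 < L)%N.
Proof. by case: L F => [F|//]; rewrite big_ord0. Qed.

Lemma sum_file_size_le_C_exact (R : realType) (n k d L : nat) (nj : 'I_L -> nat)
    (alpha gamma : R) (c : forall j, dss_code (nj j) (nj j + k - n) (nj j + d - n) alpha gamma) :
  n = (\sum_j nj j)%N -> (0 < n)%N -> (forall j, 0 < nj j)%N ->
  (forall j, 0 < nj j + d - n)%N -> (k <= n)%N -> 0 <= gamma ->
  \sum_j file_size (c j) <= C_exact n k d alpha gamma.
Proof.
move=> def_n n_gt0 nj_gt0 dj_gt0 le_kn gamma_ge0.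
have le_nj j : (nj j <= n)%N by rewrite def_n (bigD1 j) //= leq_addr.
have L_gt0 : (0 < L)%N by apply: (ord_gt0_of_sum (F := nj)); rewrite -def_n.
apply/ler_addgt0Pr => delta delta_gt0.
have [r r_gt0 approx] := weighted_average_approx def_n n_gt0
  (fun j => scale_gt0 (c j)) (fun j => file_size_ge0 (c j)) delta_gt0.
apply: (le_trans approx); rewrite lerD2r.
have := file_size_le_C_exact
  (composite_code le_nj nj_gt0 dj_gt0 r_gt0 n_gt0 L_gt0 gamma_ge0 c) le_kn.
rewrite file_size_composite.
suff -> : \sum_j (r j)%:R * (file_size (c j) * scale (c j)) =
          \sum_j (r j)%:R * ln (#|files (c j)|%:R : R) by [].
by apply: eq_bigr => j _; rewrite divfK // gt_eqF // scale_gt0.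
Qed.

Unset Implicit Arguments.

Theorem proposition6p1 (R : realType) (n k d l : nat) (ns : 'I_l -> nat)
  (hk : (0 < k)%N) (hkd : (k <= d)%N) (hdn : (d < n)%N)
  (hpos : forall j, (0 < ns j)%N)
  (hsum : n = (\sum_(j < l) ns j)%N)
  (hbig : forall j, (n - k + 1 <= ns j)%N)
  (alpha gamma : R) (ha : 0 < alpha) (hg : 0 < gamma) :
  \sum_(j < l) C_exact (ns j) (ns j + k - n)%N (ns j + d - n)%N alpha gamma
    <= C_exact n k d alpha gamma.
Proof.
have n_gt0 : (0 < n)%N by lia.
have l_gt0 : (0 < l)%N by apply: (ord_gt0_of_sum (F := ns)); rewrite -hsum.
have le_ns j : (ns j <= n)%N by rewrite hsum (bigD1 j) //= leq_addr.
have dj_gt0 j : (0 < ns j + d - n)%N by have := hbig j; lia.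
apply/ler_addgt0Pr => e e_gt0; pose eps := e / l%:R.
have near_sup j : exists c : dss_code (ns j) (ns j + k - n) (ns j + d - n) alpha gamma,
    C_exact (ns j) (ns j + k - n) (ns j + d - n) alpha gamma - eps < file_size c.
  apply: C_exact_approx; rewrite ?ltW ?divr_gt0 ?ltr0n //.
  by have := le_ns j; lia.
pose c j := sval (cid (near_sup j)).
apply: (@le_trans _ _ (\sum_j (file_size (c j) + eps))).
  by apply: ler_sum => j _; rewrite -lerBlDr ltW // (svalP (cid (near_sup j))).
rewrite big_split /= sumr_const card_ord -mulr_natr divfK ?pnatr_eq0 -?lt0n // lerD2r.
by apply: sum_file_size_le_C_exact => //; [lia | exact: ltW].
Qed.
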